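(* Let $E$ be a basic set of size $n\ge2$ in a signed group containing at least one pair of anticommuting elements. Then for some $k\in\{1,\dots,n\}$ there exist a replacement $E'$ of $E$ and a partition into disjoint sets $E'=F_0\cup F_1\cup\cdots\cup F_k$ such that each $F_j$, $j\ge1$, is anticommutative of size at least $2$, $F_0$ is commutative, and $F_j\circ F_{j'}=1$ for all $j\neq j'$, $0\le j,j'\le k$.
   Context: A signed group is a group containing a central element $-1\neq1$ with $(-1)^2=1$ such that any two elements either commute or anticommute ($ef=-fe$), and each element $e$ has $e^2\in\{\pm1\}$. For sets, $A\circ B=1$ means every element of $A$ commutes with every element of $B$. For a sequence $\mathbf e$ and finitary $0$-$1$ sequence $\mathbf p$, $\mathbf e^{\mathbf p}=e_1^{p_1}e_2^{p_2}\cdots$. A set is basic if no product $\mathbf e^{\mathbf p}$ of its elements with $\mathbf p\neq\mathbf 0$ equals $\pm1$; it generates $\{\pm\mathbf e^{\mathbf p}\}$; a replacement is another basic set generating the same group. A set is anticommutative (commutative) if its distinct elements pairwise anticommute (commute); singletons and $\emptyset$ count as both. *)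

From HB Require Import structures.
From mathcomp Require Import all_boot.

Set Implicit Arguments.
Unset Strict Implicit.
Unset Printing Implicit Defensive.

Local Open Scope group_scope.

(* (G, m) is a signed group, m being the element written -1 in the paper. *)
Definition signed_group (G : groupType) (m : G) : Prop :=
  [/\ m <> 1, m * m = 1, (forall x : G, m * x = x * m),
      (forall x y : G, x * y = y * x \/ x * y = m * (y * x)) &
      (forall e : G, e * e = 1 \/ e * e = m)].

Definition anticommute (G : groupType) (m x y : G) : Prop := x * y = m * (y * x).

Definition seqpow (G : groupType) (e : seq G) (p : bitseq) : G :=
  \prod_(x <- mask p e) x.

Definition basic (G : groupType) (m : G) (E : seq G) : Prop :=
  uniq E /\
  forall p : bitseq, size p = size E -> has id p ->
    seqpow E p <> 1 /\ seqpow E p <> m.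

Definition generated (G : groupType) (m : G) (E : seq G) (g : G) : Prop :=
  exists2 p : bitseq, size p = size E &
    (g = seqpow E p \/ g = m * seqpow E p).

Definition replacement (G : groupType) (m : G) (E E' : seq G) : Prop :=
  basic m E' /\ forall g : G, generated m E' g <-> generated m E g.

Definition anticommutative (G : groupType) (m : G) (F : seq G) : Prop :=
  forall x y, x \in F -> y \in F -> x != y -> anticommute m x y.

Definition commutative_set (G : groupType) (F : seq G) : Prop :=
  forall x y, x \in F -> y \in F -> x * y = y * x.

Definition commute_sets (G : groupType) (A B : seq G) : Prop :=
  forall x y, x \in A -> y \in B -> x * y = y * x.

(* E is basic exactly when the 2^(|E|+1) formal products +-e^p, listed by
   [genseq], are pairwise distinct. Hence a set of the same size generating
   the same group is basic again, which makes every replacement below a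
   matter of counting.
   If E is commutative there is nothing to do. Otherwise pick anticommuting
   a, b in E and replace every other c by c a^[c b = -b c] b^[c a = -a c]:
   the new elements commute with a and b, and neither the size nor the
   generated group changes. Recursing on the new elements splits off the
   anticommutative block {a, b}, until a commutative remainder F_0 is left.
   An anticommuting pair in the generated group rules out k = 0. *)

From mathcomp Require Import all_boot.

Set Implicit Arguments.
Unset Strict Implicit.
Unset Printing Implicit Defensive.

Local Open Scope group_scope.

Lemma perm_to_rem2 (T : eqType) (s : seq T) a b :
  a \in s -> b \in s -> a != b -> perm_eq s [:: a, b & rem b (rem a s)].
Proof.
move=> sa sb ab; have s_a := perm_to_rem sa.
apply: (perm_trans s_a); rewrite perm_cons perm_to_rem //.
by move: sb; rewrite (perm_mem s_a) inE eq_sym (negbTE ab).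
Qed.

Section SignedGroup.

Variables (G : groupType) (m : G).
Hypothesis sgm : signed_group m.
Implicit Types (a b c g h x y z : G) (E L R : seq G).

Lemma m_neq1 : m <> 1. Proof. by case: sgm. Qed.
Lemma mulmm : m * m = 1. Proof. by case: sgm. Qed.
Lemma commute_m x : commute m x. Proof. by case: sgm => _ _ mC _ _; exact: mC. Qed.
Lemma commute_or_anticommute x y : commute x y \/ anticommute m x y.
Proof. by case: sgm => _ _ _ cx _; exact: cx. Qed.

Definition commb x y := x * y == y * x.

Lemma commbP x y : reflect (commute x y) (commb x y). Proof. exact: eqP. Qed.

Lemma commb1 x : commb 1 x. Proof. by rewrite /commb mul1g mulg1. Qed.
Lemma commbb x : commb x x. Proof. exact: eqxx. Qed.

Lemma anticommuteP x y : reflect (anticommute m x y) (~~ commb x y).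
Proof.
apply: (iffP idP) => [/commbP nxy | axy].
  by have [//|] := commute_or_anticommute x y.
apply/commbP; rewrite /commute axy => mxy; apply: m_neq1.
by apply: (mulIg (y * x)); rewrite mul1g.
Qed.

Lemma anticommute_sym x y : anticommute m x y -> anticommute m y x.
Proof. by rewrite /anticommute => ->; rewrite mulgA mulmm mul1g. Qed.

Lemma anticommute_neq x y : anticommute m x y -> x != y.
Proof. by move/anticommuteP; apply: contraNneq => ->; exact: commbb. Qed.

Lemma anticommuteMl x y z :
  anticommute m x z -> commute y z -> anticommute m (x * y) z.
Proof. by rewrite /anticommute => axz cyz; rewrite -mulgA cyz mulgA axz !mulgA. Qed.

Lemma anticommuteMr x y z :
  commute x z -> anticommute m y z -> anticommute m (x * y) z.
Proof.
rewrite /anticommute => cxz ayz.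
by rewrite -mulgA ayz mulgA -commute_m -mulgA (mulgA x) cxz -(mulgA z).
Qed.

Lemma anticommuteMM x y z :
  anticommute m x z -> anticommute m y z -> commute (x * y) z.
Proof.
rewrite /commute => axz ayz.
rewrite -mulgA ayz mulgA -commute_m -mulgA (mulgA x) axz.
by rewrite -!mulgA (mulgA m m) mulmm mul1g.
Qed.

Lemma commbM x y z : commb (x * y) z = (commb x z == commb y z).
Proof.
have [/commbP cxz|/anticommuteP axz] := commute_or_anticommute x z;
  have [/commbP cyz|/anticommuteP ayz] := commute_or_anticommute y z.
- rewrite cxz cyz; apply/commbP/commute_sym/commuteM; exact/commute_sym/commbP.
- rewrite cxz (negbTE ayz); apply/negbTE/anticommuteP.
  by apply: anticommuteMr; [exact/commbP | exact/anticommuteP].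
- rewrite cyz (negbTE axz); apply/negbTE/anticommuteP.
  by apply: anticommuteMl; [exact/anticommuteP | exact/commbP].
- rewrite (negbTE axz) (negbTE ayz); apply/commbP.
  by apply: anticommuteMM; exact/anticommuteP.
Qed.

Lemma sqr_sign x : x * x \in [:: 1; m].
Proof. by case: sgm => _ _ _ _ /(_ x) [] ->; rewrite !inE eqxx ?orbT. Qed.

Lemma mul_sign_swap g x : exists2 s, s \in [:: 1; m] & g * x = x * (s * g).
Proof.
have [cgx|agx] := commute_or_anticommute g x.
  by exists 1; rewrite ?inE ?eqxx // mul1g.
by exists m; rewrite ?inE ?eqxx ?orbT // agx mulgA commute_m -mulgA.
Qed.

Fixpoint genseq E :=
  if E is x :: E' then genseq E' ++ [seq x * g | g <- genseq E'] else [:: 1; m].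

Lemma size_genseq E : size (genseq E) = (2 ^ (size E).+1)%N.
Proof.
by elim: E => //= x E IH; rewrite size_cat size_map IH [in RHS]expnS mul2n addnn.
Qed.

Lemma signs_genseq E : {subset [:: 1; m] <= genseq E}.
Proof. by elim: E => // x E IH g /IH; rewrite /= mem_cat => ->. Qed.

Lemma genseq1 E : 1 \in genseq E.
Proof. by apply: signs_genseq; rewrite inE eqxx. Qed.

Lemma genseqm E : m \in genseq E.
Proof. by apply: signs_genseq; rewrite !inE eqxx orbT. Qed.

Lemma mem_genseq E : {subset E <= genseq E}.
Proof.
elim: E => // x E IH g; rewrite inE /= mem_cat => /predU1P[->|/IH -> //].
by apply/orP; right; apply/mapP; exists 1; rewrite ?genseq1 ?mulg1.
Qed.

Lemma genseqM E : {in genseq E &, forall g h, g * h \in genseq E}.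
Proof.
elim: E => [|x E IH] g h.
  by rewrite !inE => /pred2P[]-> /pred2P[]->; rewrite ?mul1g ?mulg1 ?mulmm ?eqxx ?orbT.
have signsE := signs_genseq E.
rewrite /= !mem_cat => /orP[Eg|/mapP[g' Eg' ->]] /orP[Eh|/mapP[h' Eh' ->]].
- by rewrite IH.
- have [s /signsE Es gx] := mul_sign_swap g x.
  by apply/orP; right; rewrite mulgA gx -mulgA; apply: map_f; rewrite !IH.
- by apply/orP; right; rewrite -mulgA; apply: map_f; rewrite IH.
- have [s /signsE Es g'x] := mul_sign_swap g' x.
  rewrite -mulgA (mulgA g') g'x !mulgA; apply/orP; left.
  by do 3!apply: (IH) => //; apply: signsE; exact: sqr_sign.
Qed.

Lemma genseqV E : {in genseq E, forall g, g^-1 \in genseq E}.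
Proof.
move=> g Eg; move: (sqr_sign g); rewrite !inE => /pred2P[gg1|ggm].
  by rewrite (mulg1_eq gg1).
suff ->: g^-1 = m * g by rewrite genseqM ?genseqm.
by apply: mulg1_eq; rewrite mulgA -commute_m -mulgA ggm mulmm.
Qed.

Lemma genseq_subset (P : {pred G}) L :
    1 \in P -> m \in P -> {in P &, forall g h, g * h \in P} ->
  {subset L <= P} -> {subset genseq L <= P}.
Proof.
move=> P1 Pm PM; elim: L => [_ g|x L IH LP g] /=; first by rewrite !inE => /pred2P[]->.
have {}IH : {subset genseq L <= P} by apply: IH => y Ly; apply: LP; rewrite inE Ly orbT.
rewrite mem_cat => /orP[/IH //|/mapP[h /IH Ph ->]].
by apply: PM => //; apply: LP; exact: mem_head.
Qed.

Lemma genseq_sub E L : {subset L <= genseq E} -> {subset genseq L <= genseq E}.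
Proof.
move=> LE g /(@genseq_subset [pred h in genseq E]); rewrite inE; apply=> //.
- exact: genseq1.
- exact: genseqm.
- exact: genseqM.
Qed.

Lemma eq_genseq E L :
  {subset E <= genseq L} -> {subset L <= genseq E} -> genseq E =i genseq L.
Proof. by move=> EL LE g; apply/idP/idP; apply: genseq_sub. Qed.

Lemma perm_genseq E L : perm_eq E L -> genseq E =i genseq L.
Proof.
move=> EL; apply: eq_genseq => x xE; apply: mem_genseq.
  by rewrite -(perm_mem EL).
by rewrite (perm_mem EL).
Qed.

Lemma eq_genseq_cons x E L :
  genseq E =i genseq L -> genseq (x :: E) =i genseq (x :: L).
Proof. by move=> EL g; rewrite /= !mem_cat EL (eq_mem_map _ EL). Qed.

Lemma genseq_commute L z :
  {in L, forall x, commute x z} -> {in genseq L, forall g, commute g z}.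
Proof.
move=> Lz; suff sub : {subset genseq L <= [pred g | commb g z]}.
  by move=> g /sub /commbP.
apply: genseq_subset => [||g h|x /Lz /commbP //]; rewrite !inE.
- exact: commb1.
- exact/commbP/commute_m.
- by rewrite commbM => -> ->.
Qed.

Lemma commutative_genseq L :
  commutative_set L -> {in genseq L &, forall g h, commute g h}.
Proof.
move=> cL g h Lg Lh; apply: (genseq_commute _ Lg) => x Lx.
by apply/commute_sym; apply: (genseq_commute _ Lh) => y Ly; exact: cL.
Qed.

Lemma seqpow_cons x E (b : bool) (p : bitseq) :
  seqpow (x :: E) (b :: p) = (if b then x * seqpow E p else seqpow E p).
Proof. by rewrite /seqpow; case: b => //=; rewrite big_cons. Qed.

Lemma mulmCA x g : x * (m * g) = m * (x * g).
Proof. by rewrite mulgA -commute_m -mulgA. Qed.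

Lemma generatedE E g : generated m E g <-> g \in genseq E.
Proof.
elim: E g => [|x E IH] g.
  split=> [[[|//] _]|].
    by rewrite /seqpow big_nil mulg1 !inE => -[]->; rewrite eqxx ?orbT.
  rewrite !inE => /pred2P[]->; exists [::]; rewrite // /seqpow big_nil mulg1.
    by left.
  by right.
rewrite /= mem_cat; split.
  move=> [[|[] p] //= [sp]]; rewrite seqpow_cons => gE; apply/orP.
    right; apply/mapP; case: gE => ->.
      by exists (seqpow E p) => //; apply/IH; exists p; last left.
    by exists (m * seqpow E p); rewrite ?mulmCA //; apply/IH; exists p; last right.
  by left; apply/IH; exists p.
case/orP => [/IH[p sp gE] | /mapP[h /IH[p sp hE] ->]].
  by exists (false :: p); rewrite /= ?sp.
exists (true :: p); rewrite /= ?sp // seqpow_cons.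
by case: hE => ->; [left|right; rewrite mulmCA].
Qed.

Lemma uniq_genseq_cons x E :
  uniq (genseq (x :: E)) = uniq (genseq E) && (x \notin genseq E).
Proof.
rewrite /= cat_uniq (map_inj_uniq (mulgI x)). 
have -> : has [in genseq E] [seq x * g | g <- genseq E] = (x \in genseq E).
  apply/hasP/idP => [[_ /mapP[g Eg ->] Exg]|Ex].
    by rewrite -(mulgK g x) genseqM ?genseqV.
  by exists (x * 1); [apply: map_f; exact: genseq1 | rewrite mulg1].
by case: (uniq _); rewrite ?andbT.
Qed.

Lemma basic_cons x E : basic m (x :: E) <-> basic m E /\ x \notin genseq E.
Proof.
split=> [[/andP[xE uE] bxE] | [[uE bE] xE]].
  split.
    by split=> // p sp p1; apply: (bxE (false :: p)); rewrite /= ?sp.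
  apply/negP => /generatedE[p sp xq].
  have [] := bxE (true :: p) (congr1 S sp) erefl; rewrite seqpow_cons.
  move: (sqr_sign (seqpow E p)); rewrite !inE => /pred2P[] qq.
    by case: xq => ->; rewrite -?mulgA qq ?mulg1.
  by case: xq => ->; rewrite -?mulgA qq ?mulmm.
split=> [|[|[] p] //= [sp] p1]; rewrite ?seqpow_cons; last exact: bE.
  by rewrite /= uE andbT; apply: contra xE; exact: mem_genseq.
have Eq : seqpow E p \in genseq E by apply/generatedE; exists p; last left.
split=> xq; move/negP: xE; apply; rewrite -(mulgK (seqpow E p) x) xq.
  by rewrite mul1g genseqV.
by rewrite genseqM ?genseqm ?genseqV.
Qed.

Lemma basicE E : basic m E <-> uniq (genseq E).
Proof.
elim: E => [|x E IH].
  split=> [_|_]; last by split=> // [[]].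
  by rewrite /= inE andbT eq_sym; apply/eqP; exact: m_neq1.
rewrite uniq_genseq_cons; split=> [/basic_cons[/IH -> ->] // | /andP[/IH bE xE]].
exact/basic_cons.
Qed.

Lemma eq_uniq_genseq E L : size E = size L -> genseq E =i genseq L ->
  uniq (genseq E) = uniq (genseq L).
Proof.
move=> sEL EL; apply/idP/idP => u.
  by rewrite (uniq_size_uniq u EL) !size_genseq sEL.
by rewrite (uniq_size_uniq u (fun g => esym (EL g))) !size_genseq sEL.
Qed.

Definition decouple a b c :=
  c * (if commb c b then 1 else a) * (if commb c a then 1 else b).

Lemma decouple_commute_l a b c : anticommute m a b -> commute (decouple a b c) a.
Proof.
move=> /anticommute_sym /anticommuteP /negbTE ba; apply/commbP.
by rewrite !commbM; case: (commb c a); case: (commb c b); rewrite ?commb1 ?commbb ?ba.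
Qed.

Lemma decouple_commute_r a b c : anticommute m a b -> commute (decouple a b c) b.
Proof.
move=> /anticommuteP /negbTE ab; apply/commbP.
by rewrite !commbM; case: (commb c a); case: (commb c b); rewrite ?commb1 ?commbb ?ab.
Qed.

Lemma decouple_in_genseq a b c L :
  a \in genseq L -> b \in genseq L -> c \in genseq L -> decouple a b c \in genseq L.
Proof.
move=> La Lb Lc; rewrite /decouple.
by case: (commb c b); case: (commb c a); rewrite ?mulg1; do ?apply: genseqM.
Qed.

Lemma eq_genseq_decouple a b R :
  genseq [:: a, b & map (decouple a b) R] =i genseq [:: a, b & R].
Proof.
have ab_in L : a \in genseq [:: a, b & L] /\ b \in genseq [:: a, b & L].
  by split; apply: mem_genseq; rewrite !inE eqxx ?orbT.
have if1_in (P : bool) y L : y \in genseq L -> (if P then 1 else y) \in genseq L.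
  by case: P => //; rewrite genseq1.
have [La Lb] := ab_in R; have [L'a L'b] := ab_in (map (decouple a b) R).
apply: eq_genseq => x; rewrite !inE => /or3P[/eqP->|/eqP->|] //.
  case/mapP=> c Rc ->; apply: decouple_in_genseq => //.
  by apply: mem_genseq; rewrite !inE Rc !orbT.
move=> Rx; have -> : x = decouple a b x * (if commb x a then 1 else b)^-1
                                        * (if commb x b then 1 else a)^-1.
  by rewrite /decouple !mulgK.
apply: genseqM; first apply: genseqM.
all: rewrite ?genseqV ?if1_in //.
by apply: mem_genseq; rewrite !inE map_f ?orbT.
Qed.

Lemma commutative_or_anticommuting_pair E :
  commutative_set E \/ exists2 a, a \in E & exists2 b, b \in E & anticommute m a b.
Proof.
have [cE | /allPn[a Ea /allPn[b Eb /anticommuteP ab]]] :=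
  boolP (all (fun a => all (commb a) E) E); last by right; exists a => //; exists b.
by left=> x y Ex Ey; apply/commbP; exact: allP (allP cE x Ex) y Ey.
Qed.

Definition decomposition E k (F : nat -> seq G) :=
  [/\ perm_eq E (flatten [seq F j | j <- iota 0 k.+1]),
      (forall j, 1 <= j <= k -> anticommutative m (F j) /\ 2 <= size (F j)),
      commutative_set (F 0) &
      (forall j j', j <= k -> j' <= k -> j != j' -> commute_sets (F j) (F j'))]%N.

Lemma decomposition_commutative E : commutative_set E -> decomposition E 0 (fun=> E).
Proof. by split=> //=; [rewrite cats0 | case]. Qed.

Lemma decomposition0_commutative E F : decomposition E 0 F -> commutative_set E.
Proof. by case=> /perm_mem EF _ cF0 _ x y; rewrite !EF /= cats0; exact: cF0. Qed.

Lemma decomposition_cons2 E k F a b :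
    decomposition E k F -> anticommute m a b ->
    {in E, forall x, commute x a /\ commute x b} ->
  decomposition [:: a, b & E] k.+1 (fun j => if (j <= k)%N then F j else [:: a; b]).
Proof.
move=> [permE blocks cF0 cross] ab cEab.
have FE j : (j <= k)%N -> {subset F j <= E}.
  move=> jk x Fx; rewrite (perm_mem permE); apply/flattenP; exists (F j) => //.
  by apply: map_f; rewrite mem_iota add0n ltnS.
split=> //.
- rewrite -addn1 iotaD map_cat flatten_cat.
  have /eq_in_map-> :
      {in iota 0 k.+1, (fun j => if (j <= k)%N then F j else [:: a; b]) =1 F}.
    by move=> j; rewrite mem_iota ltnS => /andP[_ ->].
  by rewrite /= ltnn cats0 perm_sym perm_catC /= !perm_cons perm_sym.
- move=> j /andP[j1 jk]; case: ifP => [jk'|_]; first by apply: blocks; rewrite j1.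
  split=> // x y; rewrite !inE => /pred2P[]-> /pred2P[]-> //; rewrite ?eqxx //.
  by move=> _; exact: anticommute_sym.
- move=> j j'; case: ifP => jk; case: ifP => j'k.
  + by move=> _ _; exact: cross.
  + by move=> _ _ _ x y /(FE _ jk) /cEab[xa xb]; rewrite !inE => /pred2P[]->.
  + move=> _ _ _ x y; rewrite !inE => /pred2P[]-> /(FE _ j'k) /cEab[ya yb];
    exact: commute_sym.
  + move=> jk1 j'k1; have [-> ->] : j = k.+1 /\ j' = k.+1.
      by split; apply/eqP; rewrite eqn_leq ?jk1 ?j'k1 ltnNge ?jk ?j'k.
    by rewrite eqxx.
Qed.

Lemma decomposition_exists E : uniq (genseq E) ->
  exists k E' F, [/\ (k <= size E)%N, size E' = size E,
                     genseq E' =i genseq E & decomposition E' k F].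
Proof.
have [n] := ubnP (size E); elim: n E => // n IHn E /ltnSE sEn uE.
have [cE | [a Ea [b Eb ab]]] := commutative_or_anticommuting_pair E.
  by exists 0%N, E, (fun=> E); split=> //; exact: decomposition_commutative.
have permE := perm_to_rem2 Ea Eb (anticommute_neq ab).
set R := rem b (rem a E) in permE; set E1 := map (decouple a b) R.
have sizeE : size [:: a, b & E1] = size E by rewrite (perm_size permE) /= size_map.
have spanE1 : genseq [:: a, b & E1] =i genseq E.
  by move=> g; rewrite eq_genseq_decouple (perm_genseq permE).
have uE1 : uniq (genseq E1).
  move: uE; rewrite -(eq_uniq_genseq sizeE spanE1) !uniq_genseq_cons.
  by case/andP=> /andP[].
have [|k1 [E2 [F1 [k1E1 sE2 spanE2 dE2]]]] := IHn E1 _ uE1.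
  by move: sEn; rewrite -sizeE => /ltnW.
exists k1.+1, [:: a, b & E2], (fun j => if (j <= k1)%N then F1 j else [:: a; b]).
split; first by rewrite -sizeE /= ltnS leqW.
- by rewrite -sizeE /= sE2.
- by move=> g; rewrite -spanE1; do 2!apply: eq_genseq_cons.
apply: decomposition_cons2 => // x /mem_genseq; rewrite spanE2.
have E1_ab : {in E1, forall y, commute y a /\ commute y b}.
  move=> _ /mapP[c _ ->].
  by split; [exact: decouple_commute_l | exact: decouple_commute_r].
by move=> E1x; split; apply: (genseq_commute _ E1x) => y /E1_ab[].
Qed.

End SignedGroup.

Theorem theorem5p6 (G : groupType) (m : G) (E : seq G) :
  signed_group m ->
  basic m E ->
  (2 <= size E)%N ->
  (exists x y : G, [/\ generated m E x, generated m E y & anticommute m x y]) ->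
  exists (k : nat) (E' : seq G) (F : nat -> seq G),
    [/\ (1 <= k <= size E)%N /\ replacement m E E',
        perm_eq E' (flatten [seq F j | j <- iota 0 k.+1]),
        (forall j, (1 <= j <= k)%N -> anticommutative m (F j) /\ (2 <= size (F j))%N),
        commutative_set (F 0%N) &
        (forall j j', (j <= k)%N -> (j' <= k)%N -> j != j' -> commute_sets (F j) (F j'))].
Proof.
(* The hypothesis [2 <= size E] is implied by the anticommuting pair. *)
move=> sgm /(basicE sgm) uE _ [x [y [/(generatedE sgm) Ex /(generatedE sgm) Ey axy]]].
have [k [E' [F [kE sE' spanE' dE']]]] := decomposition_exists sgm uE.
have k_gt0 : (0 < k)%N.
  rewrite lt0n; apply/eqP=> k0; move: dE'; rewrite k0 => /decomposition0_commutative cE'.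
  move/(anticommuteP sgm)/negP: axy; apply; apply/commbP.
  by apply: (commutative_genseq sgm cE'); rewrite spanE'.
have [permE' blocks cF0 cross] := dE'.
exists k, E', F; split=> //; split; first by rewrite k_gt0.
split; first by apply/(basicE sgm); rewrite (eq_uniq_genseq sE' spanE').
move=> g; split=> /(generatedE sgm) Eg; apply/(generatedE sgm).
  by rewrite -spanE'.
by rewrite spanE'.
Qed.
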